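(* Consider the network model and the LC-NSB algorithm described in the context, with no packet arrivals after time 0. Consider any frame $k'$, consisting of time-slots $p=3k'$, $p+1$, $p+2$. If $\Delta(p)\ge 2$, then under LC-NSB the maximum node queue length at the end of the frame (i.e., after the transmissions of slot $p+2$) is at most $\Delta(p)-2$.
   Context: Network model. $G=(V,E)$ is a finite undirected graph with $n=|V|$ nodes; $L(i)$ denotes the set of links incident to node $i$. Time is slotted, $k=0,1,2,\dots$. $Q_l(k)$ is the number of packets at link $l$ in slot $k$, $Q_i(k)=\sum_{l\in L(i)}Q_l(k)$ is the node queue length, and $\Delta(k)=\max_iQ_i(k)$. A schedule is a matching of $G$ (links pairwise sharing no endpoint); only links with $Q_l(k)>0$ may be scheduled; each scheduled link transmits one packet, which leaves the system. LC-NSB algorithm. Frame $k'$ consists of slots $3k',3k'+1,3k'+2$. $R_i(k)=1$ if node $i$ is an endpoint of a link scheduled in slot $k$, else $0$ ($R_i(k)=0$ for $k<0$). $U_i(k)=R_i(k-1)R_i(k-2)$ if $k=3k'+2$ for some integer $k'$, $U_i(k)=R_i(k-1)$ otherwise. Node $i$ is critical in slot $k$ if $Q_i(k)=\Delta(k)$ and heavy if $Q_i(k)\ge\frac{n-1}{n}\Delta(k)$. In slot $k$, LC-NSB sets $w_i(k)=5-2U_i(k)$ if $i$ is critical, $w_i(k)=4-2U_i(k)$ if $i$ is heavy but not critical, and $w_i(k)=1$ otherwise; it excludes links with $Q_l(k)=0$ and schedules a matching $M$ of the remaining links maximizing $\sum_{i:\,M\cap L(i)\ne\emptyset}w_i(k)$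 (ties broken arbitrarily). *)

From mathcomp Require Import all_boot.
Set Implicit Arguments. Unset Strict Implicit. Unset Printing Implicit Defensive.

Section Model.
Variables (V : finType) (e : rel V).

Definition is_link (l : {set V}) : bool :=
  [exists x, exists y, e x y && (l == [set x; y])].

(* Q : link queue lengths (values on non-links are ignored). *)
Definition node_queue (Q : {set V} -> nat) (i : V) : nat :=
  \sum_(l : {set V} | is_link l && (i \in l)) Q l.

Definition maxq (Q : {set V} -> nat) : nat := \max_(i : V) node_queue Q i.

Definition is_schedule (Q : {set V} -> nat) (M : {set {set V}}) : Prop :=
  (forall l, l \in M -> is_link l /\ 0 < Q l) /\
  (forall l1 l2, l1 \in M -> l2 \in M -> l1 != l2 -> [disjoint l1 & l2]).

Definition served (M : {set {set V}}) (i : V) : bool := [exists l in M, i \in l].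

(* R_i(k) for k >= 0 (slots are nat); R_i(k) = 0 for k < 0 is handled in Uv. *)
Definition Rv (Ms : nat -> {set {set V}}) (k : nat) (i : V) : bool := served (Ms k) i.

Definition Uv (Ms : nat -> {set {set V}}) (k : nat) (i : V) : bool :=
  if k %% 3 == 2 then Rv Ms k.-1 i && Rv Ms k.-2 i   (* here k >= 2 *)
  else (0 < k) && Rv Ms k.-1 i.

(* critical: Q_i = Delta;  heavy: Q_i >= (n-1)/n Delta, i.e. n Q_i >= (n-1) Delta *)
Definition critical (Q : {set V} -> nat) (i : V) : bool := node_queue Q i == maxq Q.
Definition heavy (Q : {set V} -> nat) (i : V) : bool :=
  (#|V| - 1) * maxq Q <= #|V| * node_queue Q i.

Definition weight (Q : {set V} -> nat) (u : bool) (i : V) : nat :=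
  if critical Q i then 5 - 2 * u
  else if heavy Q i then 4 - 2 * u
  else 1.

Definition sched_weight (w : V -> nat) (M : {set {set V}}) : nat :=
  \sum_(i : V | served M i) w i.

Definition lcnsb_choice (Q : nat -> {set V} -> nat) (Ms : nat -> {set {set V}})
    (k : nat) : Prop :=
  let w := fun i => weight (Q k) (Uv Ms k i) i in
  is_schedule (Q k) (Ms k) /\
  forall M, is_schedule (Q k) M -> sched_weight w M <= sched_weight w (Ms k).

Definition no_arrival_dynamics (Q : nat -> {set V} -> nat) (Ms : nat -> {set {set V}})
  : Prop := forall k l, Q k.+1 l = Q k l - (l \in Ms k).

End Model.

(* Let D be the maximum queue at the start of a frame. A node served in neither of
   the first two slots keeps its queue; if that queue is D, the node is critical with
   U = 0 (weight 5) in the second slot. Such nodes are never joined by a backlogged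
   link, since the maximal schedule of the first slot served an end of it. A
   maximum-weight schedule serves every weight-5 node whenever these nodes are
   critical and bipartite along backlogged links: double counting of the queues
   gives Hall's condition, the resulting system of representatives yields a schedule
   covering them, and an alternating-path exchange would otherwise increase the
   weight. So all queues are at most D - 1 after two slots. In the third slot a node
   still at D - 1 is critical with U = 0, and a backlogged link between two such
   nodes joins one served in the second slot to one that was not (by maximality in
   the first two slots), which is the bipartition; hence every one of them is served. *)
From mathcomp Require Import all_boot zify.
Set Implicit Arguments. Unset Strict Implicit. Unset Printing Implicit Defensive.

Section Hall.
Variable T : finType.
Implicit Types (R : rel T) (S W : {set T}).

Definition nbh R S : {set T} := [set y | [exists x in S, R x y]].

Lemma nbhP R S y : reflect (exists2 x, x \in S & R x y) (y \in nbh R S).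
Proof. by rewrite inE; apply: exists_inP. Qed.

Definition hall_condition R W := forall S, S \subset W -> #|S| <= #|nbh R S|.

Definition has_sdr R W :=
  exists2 f : T -> T, (forall x, x \in W -> R x (f x)) & {in W &, injective f}.

Lemma hall_condition_sub R W W' :
  W' \subset W -> hall_condition R W -> hall_condition R W'.
Proof. by move=> sW'W hW S sSW'; apply/hW/(subset_trans sSW'). Qed.

Lemma has_sdr0 R : has_sdr R set0.
Proof. by exists id => [x|x y]; rewrite inE. Qed.

Section HallStep.
Variables (R : rel T) (W : {set T}).
Hypothesis IH : forall R' W', #|W'| < #|W| -> hall_condition R' W' -> has_sdr R' W'.
Hypothesis hallW : hall_condition R W.

Lemma hall_condition_outside S : S \subset W -> #|nbh R S| <= #|S| ->
  hall_condition [rel x y | R x y && (y \notin nbh R S)] (W :\: S).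
Proof.
move=> sSW tightS S'; set R' := [rel x y | _]; rewrite subsetD => /andP [sS'W disS'S].
have nbhU : nbh R (S' :|: S) \subset nbh R' S' :|: nbh R S.
  apply/subsetP => y /nbhP [x]; rewrite in_setU => /orP [xS'|xS] Rxy; rewrite in_setU.
    case: (boolP (y \in nbh R S)) => [yS | nyS]; rewrite ?yS ?orbT //.
    by apply/orP; left; apply/nbhP; exists x; rewrite //= Rxy.
  by apply/orP; right; apply/nbhP; exists x.
have sUW : S' :|: S \subset W by rewrite subUset sS'W sSW.
have := leq_trans (hallW sUW) (subset_leq_card nbhU).
rewrite cardsU (disjoint_setI0 disS'S) cards0 subn0.
move/leq_trans/(_ (leq_card_setU _ _)); lia.
Qed.

Lemma has_sdr_tight S : S \subset W -> 0 < #|S| < #|W| -> #|nbh R S| <= #|S| ->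
  has_sdr R W.
Proof.
move=> sSW /andP [S_gt0 ltSW] tightS.
have [f1 f1R f1inj] := IH ltSW (hall_condition_sub sSW hallW).
have ltWS : #|W :\: S| < #|W| by rewrite cardsDS //; lia.
have [f2 f2R f2inj] := IH ltWS (hall_condition_outside sSW tightS).
have f2Rout x : x \in W -> x \notin S -> R x (f2 x) && (f2 x \notin nbh R S).
  by move=> xW xS; apply: f2R; rewrite inE xS.
exists (fun x => if x \in S then f1 x else f2 x) => [x xW | x y xW yW /=].
  by case: ifP => xS; [apply: f1R | case/andP: (f2Rout x xW (negbT xS))].
have f1nbh z : z \in S -> f1 z \in nbh R S by move=> zS; apply/nbhP; exists z; rewrite ?f1R.
case: ifP => xS; case: ifP => yS.
- exact: f1inj.
- by move=> E; case/andP: (f2Rout y yW (negbT yS)); rewrite -E f1nbh.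
- by move=> E; case/andP: (f2Rout x xW (negbT xS)); rewrite E f1nbh.
- by apply: f2inj; rewrite inE ?xS ?yS.
Qed.

Lemma has_sdr_loose :
  (forall S, S \subset W -> 0 < #|S| < #|W| -> #|S| < #|nbh R S|) -> has_sdr R W.
Proof.
move=> loose; have [-> | [x0 x0W]] := set_0Vmem W; first exact: has_sdr0.
have [y0 /nbhP [_ /set1P -> Rx0y0]] : exists y0, y0 \in nbh R [set x0].
  by apply/card_gt0P; apply: leq_trans (hallW _); rewrite ?cards1 ?sub1set.
pose R' := [rel x y | R x y && (y != y0)].
have ltW' : #|W :\ x0| < #|W| by rewrite [#|W|](cardsD1 x0) x0W.
have hall' : hall_condition R' (W :\ x0).
  move=> S sS; have [-> | [x1 x1S]] := set_0Vmem S; first by rewrite cards0.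
  have sSW : S \subset W := subset_trans sS (subD1set _ _).
  have S_gt0 : 0 < #|S| by apply/card_gt0P; exists x1.
  have := loose S sSW; rewrite S_gt0 (leq_ltn_trans (subset_leq_card sS) ltW') => /(_ isT).
  have sub : nbh R S :\ y0 \subset nbh R' S.
    apply/subsetP => y; rewrite !inE => /andP [ny0 /exists_inP [x xS Rxy]].
    by apply/exists_inP; exists x; rewrite //= Rxy ny0.
  have := subset_leq_card sub; rewrite [#|nbh R S|](cardsD1 y0); lia.
have [f f'R finj] := IH ltW' hall'.
have fR x : x \in W -> x != x0 -> R x (f x) && (f x != y0).
  by move=> xW xx0; apply: f'R; rewrite !inE xx0.
exists (fun x => if x == x0 then y0 else f x) => [x xW | x y xW yW /=].
  by case: eqP => [-> //| /eqP xx0]; case/andP: (fR x xW xx0).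
case: eqP => [->|/eqP xx0]; case: eqP => [->|/eqP yx0] //.
- by move=> E; case/andP: (fR y yW yx0); rewrite E eqxx.
- by move=> E; case/andP: (fR x xW xx0); rewrite E eqxx.
- by apply: finj; rewrite !inE ?xx0 ?yx0.
Qed.

End HallStep.

Theorem hall_marriage R W : hall_condition R W -> has_sdr R W.
Proof.
have [n] := ubnP #|W|; elim: n R W => // n IH R W ltWn hallW.
have IHW R' W' : #|W'| < #|W| -> hall_condition R' W' -> has_sdr R' W'.
  by move=> ltW'W; apply: IH; lia.
have [/existsP [S /and4P [sSW S_gt0 ltSW tightS]] | /existsPn loose] :=
  boolP [exists S : {set T}, [&& S \subset W, 0 < #|S|, #|S| < #|W| & #|nbh R S| <= #|S|]].
  by apply: has_sdr_tight IHW hallW _ sSW _ tightS; rewrite S_gt0.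
apply: has_sdr_loose IHW hallW _ => S sSW /andP [S_gt0 ltSW].
by move: (loose S); rewrite sSW S_gt0 ltSW -ltnNge.
Qed.

End Hall.

Lemma properD_swap (T : finType) (A B : {set T}) a b :
  a \in A -> a \notin B -> b \notin A -> A :\: (a |: (B :\ b)) \proper A :\: B.
Proof.
move=> aA aB bA; apply/properP; split; last by exists a; rewrite !inE ?aA ?aB ?eqxx.
apply/subsetP => c; rewrite !inE negb_or negb_and negbK => /andP [/andP [_ cbB] cA].
by rewrite cA andbT; case/orP: cbB => [/eqP cb | //]; rewrite -cb cA in bA.
Qed.

Section Schedules.
Variables (V : finType) (e : rel V).
Hypotheses (e_sym : symmetric e) (e_irr : irreflexive e).
Implicit Types (Q : {set V} -> nat) (M : {set {set V}}) (l : {set V}) (w : V -> nat).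

Definition pos_link Q : rel V := [rel x y | e x y && (0 < Q [set x; y])].

Lemma is_link_set2 x y : e x y -> is_link e [set x; y].
Proof. by move=> exy; apply/existsP; exists x; apply/existsP; exists y; rewrite exy eqxx. Qed.

Lemma is_link_other_end l z : is_link e l -> z \in l -> exists2 y, e z y & l = [set z; y].
Proof.
case/existsP=> a /existsP [b /andP [eab /eqP ->]] /set2P [] ->; first by exists b.
by exists a; rewrite 1?e_sym // setUC.
Qed.

Lemma schedule_link_uniq Q M l1 l2 i : is_schedule e Q M -> l1 \in M -> l2 \in M ->
  i \in l1 -> i \in l2 -> l1 = l2.
Proof.
case=> _ disM l1M l2M il1 il2; apply/eqP; apply: contraT => l12.
by rewrite (disjointFr (disM _ _ l1M l2M l12) il1) in il2.
Qed.

Lemma schedule_subset Q M M' : M' \subset M -> is_schedule e Q M -> is_schedule e Q M'.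
Proof. by move=> /subsetP sM'M [linkM disM]; split=> [l /sM'M | l1 l2 /sM'M + /sM'M]; auto. Qed.

Lemma schedule_add Q M l : is_schedule e Q M -> is_link e l -> 0 < Q l ->
  (forall i, i \in l -> ~~ served M i) -> is_schedule e Q (l |: M).
Proof.
move=> [linkM disM] ll Ql lfree.
have disl l' : l' \in M -> [disjoint l & l'].
  move=> l'M; rewrite disjoints_subset; apply/subsetP => i il; rewrite inE.
  by apply: contra (lfree i il) => il'; apply/exists_inP; exists l'.
split=> [l' /setU1P [-> | /linkM] // | l1 l2 /setU1P [-> | l1M] /setU1P [-> | l2M]].
- by rewrite eqxx.
- by move=> _; apply: disl.
- by move=> _; rewrite disjoint_sym; apply: disl.
- exact: disM.
Qed.

Lemma served_setU1 l M i : served (l |: M) i = (i \in l) || served M i.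
Proof.
apply/exists_inP/orP => [[l' /setU1P [-> | l'M] il'] | [il | /exists_inP [l' l'M il']]].
- by left.
- by right; apply/exists_inP; exists l'.
- by exists l; rewrite ?setU11.
- by exists l'; rewrite ?setU1r.
Qed.

Lemma served_setD1 Q M l i : is_schedule e Q M -> l \in M ->
  served (M :\ l) i = served M i && (i \notin l).
Proof.
move=> SM lM; apply/exists_inP/andP => [[l' /setD1P [l'l l'M] il'] | [/exists_inP [l' l'M il'] il]].
  split; first by apply/exists_inP; exists l'.
  by apply: contra l'l => il; rewrite (schedule_link_uniq SM l'M lM il' il).
by exists l' => //; rewrite !inE l'M andbT; apply: contraNneq il => <-.
Qed.

Lemma sched_weight_add1 w M M' z : ~~ served M z ->
  (forall i, (i == z) || served M i -> served M' i) ->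
  sched_weight w M + w z <= sched_weight w M'.
Proof.
move=> nz H; rewrite /sched_weight [X in _ <= X](bigD1 z) ?H ?eqxx //= addnC leq_add2l.
apply: (sub_le_big (fun _ => leqnn _) (fun x y => leq_addr y x)) => i si.
by rewrite H ?si ?orbT //=; apply: contraNneq nz => <-.
Qed.

Lemma sched_weight_swap w M M' z x : ~~ served M z -> served M x ->
  (forall i, (i == z) || served M i -> i != x -> served M' i) ->
  sched_weight w M + w z <= sched_weight w M' + w x.
Proof.
move=> nz sx H; have zx : z != x by apply: contraNneq nz => ->.
rewrite /sched_weight (bigD1 x) //= [X in _ <= X + _](bigD1 z) ?H ?eqxx //=.
suff : \sum_(i | served M i && (i != x)) w i <= \sum_(i | served M' i && (i != z)) w i.
  by lia.
apply: (sub_le_big (fun _ => leqnn _) (fun x y => leq_addr y x)) => i /andP [si ix].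
by rewrite H ?si ?orbT //=; apply: contraNneq nz => <-.
Qed.

Definition max_weight_schedule Q w M :=
  is_schedule e Q M /\ forall M', is_schedule e Q M' -> sched_weight w M' <= sched_weight w M.

Lemma schedule_add_pos_link Q M x y : is_schedule e Q M -> pos_link Q x y ->
  ~~ served M x -> ~~ served M y -> is_schedule e Q ([set x; y] |: M).
Proof.
move=> SM /andP [exy Qxy] nx ny.
by apply: schedule_add => // [|i /set2P [] ->] //; apply: is_link_set2.
Qed.

Lemma max_weight_schedule_maximal Q w M x y : max_weight_schedule Q w M ->
  (forall i, 0 < w i) -> pos_link Q x y -> served M x || served M y.
Proof.
move=> [SM optM] w_gt0 xy; apply: contraT; rewrite negb_or => /andP [nx ny].
have serves_more i : (i == x) || served M i -> served ([set x; y] |: M) i.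
  by rewrite served_setU1 !inE -orbA => /orP [-> | ->]; rewrite ?orbT.
have := sched_weight_add1 w nx serves_more.
have := optM _ (schedule_add_pos_link SM xy nx ny); have := w_gt0 x; lia.
Qed.

Lemma schedule_swap Q M l2 z y : is_schedule e Q M -> pos_link Q z y -> ~~ served M z ->
  l2 \in M -> y \in l2 -> is_schedule e Q ([set z; y] |: (M :\ l2)).
Proof.
move=> SM /andP [ezy Qzy] nz l2M yl2.
apply: schedule_add (schedule_subset (subD1set _ _) SM) (is_link_set2 ezy) Qzy _.
by move=> i /set2P [] ->; rewrite (served_setD1 _ SM l2M) negb_and ?nz ?yl2 ?orbT.
Qed.

Definition augments Ms M z M' :=
  (forall i, (i == z) || served M i -> served M' i) \/
  exists2 x, served M x && ~~ served Ms x &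
    forall i, (i == z) || served M i -> i != x -> served M' i.

Lemma augments_trans Ms M M1 M' z x : served Ms z ->
  (forall i, (i == z) || served M i -> i != x -> served M1 i) ->
  (forall i, served M1 i -> (i == z) || served M i) ->
  augments Ms M1 x M' -> augments Ms M z M'.
Proof.
move=> sz C1 C2 aug1.
have C1' i : (i == z) || served M i -> (i == x) || served M1 i.
  by move=> Hi; case: (eqVneq i x) => [// | ix]; rewrite C1 ?orbT.
case: aug1 => [H | [x' /andP [sx' nsx'] H]]; first by left=> i /C1' /H.
have x'z : x' != z by apply: contraNneq nsx' => ->.
right; exists x' => [|i /C1' Hi ix']; last exact: H.
by move: (C2 _ sx'); rewrite (negbTE x'z) nsx' andbT.
Qed.

(* Alternating path: the [Ms]-link at [z] replaces the [M]-link it meets,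
   freeing a node [x] that is then treated in the same way. *)
Lemma schedule_exchange Q M Ms z : is_schedule e Q M -> is_schedule e Q Ms ->
  served Ms z -> ~~ served M z -> exists2 M', is_schedule e Q M' & augments Ms M z M'.
Proof.
have [n] := ubnP #|Ms :\: M|; elim: n M z => // n IH M z ltMn SM SMs.
move=> sz nz; have /exists_inP [l lMs zl] := sz.
have lnM : l \notin M by apply: contra nz => lM; apply/exists_inP; exists l.
have [ll Ql] := SMs.1 l lMs; have [y ezy ly] := is_link_other_end ll zl.
have zy : pos_link Q z y by rewrite /pos_link /= ezy -ly.
have [sy | ny] := boolP (served M y); last first.
  exists ([set z; y] |: M); first exact: schedule_add_pos_link.
  by left=> i; rewrite served_setU1 !inE -orbA => /orP [-> | ->]; rewrite ?orbT.
have /exists_inP [l2 l2M yl2] := sy.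
have [x eyx l2yx] := is_link_other_end (SM.1 l2 l2M).1 yl2.
have l2nMs : l2 \notin Ms.
  apply: contra lnM => l2Ms.
  by rewrite (schedule_link_uniq SMs lMs l2Ms (_ : y \in l) yl2) // ly set22.
set M1 := [set z; y] |: (M :\ l2).
have servedM1 i : served M1 i = (i \in [set z; y]) || served M i && (i \notin [set y; x]).
  by rewrite served_setU1 (served_setD1 _ SM l2M) l2yx.
have xz : x != z.
  by apply: contraNneq nz => <-; apply/exists_inP; exists l2; rewrite // l2yx set22.
have xy : x != y by apply: contraTneq eyx => ->; rewrite e_irr.
have nx1 : ~~ served M1 x by rewrite servedM1 !inE (negbTE xz) (negbTE xy) eqxx orbT andbF.
have C1 i : (i == z) || served M i -> i != x -> served M1 i.
  rewrite servedM1 !inE => /orP [-> // | ->] ix; rewrite (negbTE ix) orbF /=.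
  by case: (i == y); rewrite ?orbT.
have C2 i : served M1 i -> (i == z) || served M i.
  by rewrite servedM1 !inE => /orP [/orP [-> | /eqP ->] | /andP [-> _]]; rewrite ?sy ?orbT.
have SM1 : is_schedule e Q M1 := schedule_swap SM zy nz l2M yl2.
have [sx | nsx] := boolP (served Ms x); last first.
  exists M1 => //; right; exists x => //.
  by rewrite nsx andbT; apply/exists_inP; exists l2; rewrite // l2yx set22.
have ltM1n : #|Ms :\: M1| < n.
  by rewrite /M1 -ly; apply: leq_trans (proper_card (properD_swap lMs lnM l2nMs)) ltMn.
have [M' SM' aug] := IH M1 x ltM1n SM1 SMs sx nx1.
by exists M' => //; apply: augments_trans sz C1 C2 aug.
Qed.

Lemma node_queue_nbr Q x : node_queue e Q x = \sum_(y | e x y) Q [set x; y].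
Proof.
have inj : {in [pred y | e x y] &, injective (fun y => [set x; y])}.
  move=> y1 y2 exy1 exy2 E; have : y1 \in [set x; y2] by rewrite -E !inE eqxx orbT.
  by case/set2P => // y1x; rewrite y1x inE e_irr in exy1.
rewrite /node_queue -(big_imset _ inj); apply: eq_bigl => l.
apply/andP/imsetP => [[ll xl] | [y exy ->]].
  by have [y exy ->] := is_link_other_end ll xl; exists y.
by rewrite is_link_set2 ?set21.
Qed.

Lemma node_queue_transmit Q Q' M : is_schedule e Q M ->
  (forall l, Q' l = Q l - (l \in M)) ->
  forall i, node_queue e Q' i = node_queue e Q i - served M i.
Proof.
move=> SM Q'E i; rewrite /node_queue (eq_bigr _ (fun l _ => Q'E l)) sumnB; last first.
  by move=> l _; case: (boolP (l \in M)) => // /(SM.1 l) [].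
congr (_ - _); have [/exists_inP [l lM il] | ni] := boolP (served M i).
  rewrite (bigD1 l) /= ?lM ?il ?(SM.1 l lM).1 // big1 // => l' /andP [/andP [_ il'] l'l].
  by apply/eqP; rewrite eqb0; apply: contra l'l => l'M; rewrite (schedule_link_uniq SM l'M lM il' il).
apply: big1 => l /andP [_ il]; apply/eqP; rewrite eqb0; apply: contra ni => lM.
by apply/exists_inP; exists l.
Qed.

Lemma node_queue_le_maxq Q i : node_queue e Q i <= maxq e Q.
Proof. exact: leq_bigmax. Qed.

Lemma maxq_le Q m : (forall i, node_queue e Q i <= m) -> maxq e Q <= m.
Proof. by move=> le_m; apply/bigmax_leqP => i _. Qed.

(* Double counting: each critical node of S carries maxq packets, all on links
   into nbh S, and no node of nbh S carries more than maxq. *)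
Lemma hall_condition_critical Q (W : {set V}) : 0 < maxq e Q ->
  (forall x, x \in W -> critical e Q x) -> hall_condition (pos_link Q) W.
Proof.
move=> maxq_gt0 critW S sSW; rewrite -(leq_pmul2r maxq_gt0).
pose a x y := if e x y then Q [set x; y] else 0.
have queueS x : x \in S -> node_queue e Q x = \sum_(y in nbh (pos_link Q) S) a x y.
  move=> xS; rewrite node_queue_nbr big_mkcond (bigID (mem (nbh (pos_link Q) S))) /=.
  rewrite [X in _ + X]big1 ?addn0 => [|y]; first by apply: eq_bigr => y; rewrite /a; case: ifP.
  rewrite /a; case: ifP => // exy; apply: contraNeq => Q_gt0.
  by apply/nbhP; exists x; rewrite // /pos_link /= exy lt0n.
have toy y : \sum_(x in S) a x y <= maxq e Q.
  apply: leq_trans (node_queue_le_maxq Q y); rewrite node_queue_nbr.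
  rewrite big_mkcond [X in _ <= X]big_mkcond /=; apply: leq_sum => x _.
  by rewrite /a e_sym setUC; case: (x \in S); case: (e y x).
rewrite -!sum_nat_const.
apply: (@leq_trans (\sum_(y in nbh (pos_link Q) S) \sum_(x in S) a x y)); last first.
  by apply: leq_sum => y _; apply: toy.
rewrite exchange_big /=; apply: eq_leq; apply: eq_bigr => x xS.
by rewrite -queueS //; apply/esym/eqP/critW/(subsetP sSW).
Qed.

Section SdrSchedule.
Variables (Q : {set V} -> nat) (c : V -> bool) (f : V -> V).

Definition sdr_schedule (W : {set V}) M :=
  [/\ is_schedule e Q M, forall x, x \in W -> served M x
    & M \subset [set [set x; f x] | x in W]].

Section OnW.
Variable W : {set V}.
Hypotheses (fW : forall x, x \in W -> pos_link Q x (f x)) (f_inj : {in W &, injective f}).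
Hypothesis c_proper : {in W &, forall x y, pos_link Q x y -> c x != c y}.

Lemma sdr_schedule_perm : (forall v, v \in W -> exists2 x, x \in W & f x = v) ->
  sdr_schedule W [set [set x; f x] | x in [set x in W | c x]].
Proof.
move=> f_onto; set U := [set x in W | c x].
have linkU x : x \in U -> is_link e [set x; f x] /\ 0 < Q [set x; f x].
  by rewrite inE => /andP [/fW /andP [exfx Q_gt0] _]; rewrite is_link_set2.
have U_fU x y : x \in U -> y \in U -> x != f y.
  rewrite !inE => /andP [xW cx] /andP [yW cy]; apply/eqP => xfy.
  have fyW : f y \in W by rewrite -xfy.
  by have := c_proper yW fyW (fW yW); rewrite -xfy cx cy.
split.
- split; first by move=> l /imsetP [x xU ->]; apply: linkU.
  move=> l1 l2 /imsetP [x1 x1U ->] /imsetP [x2 x2U ->] l12.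
  have x12 : x1 != x2 by apply: contraNneq l12 => ->.
  rewrite disjoints_subset; apply/subsetP => i; rewrite !inE => /orP [] /eqP ->.
    by rewrite negb_or x12 U_fU.
  rewrite negb_or eq_sym U_fU //=; apply: contra x12 => /eqP /f_inj -> //.
    by case/setIdP: x1U.
  by case/setIdP: x2U.
- move=> v vW; have [cv | ncv] := boolP (c v).
    by apply/exists_inP; exists [set v; f v]; rewrite ?set21 //; apply: imset_f; rewrite inE vW.
  have [x xW fxv] := f_onto v vW.
  have cx : c x.
    have := c_proper xW vW; rewrite -[in pos_link _ _ _]fxv => /(_ (fW xW)).
    by rewrite (negbTE ncv); case: (c x).
  apply/exists_inP; exists [set x; f x]; rewrite ?fxv ?set22 //.
  by rewrite -fxv; apply: imset_f; rewrite inE xW.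
- by apply/imsetS/subsetP => x /setIdP [].
Qed.

Lemma sdr_schedule_source v M : v \in W -> (forall x, x \in W -> f x != v) ->
  sdr_schedule (W :\ v :\ f v) M -> sdr_schedule W ([set v; f v] |: M).
Proof.
move=> vW v_src [SM coverM /subsetP sM]; set W' := W :\ v :\ f v.
have W'W x : x \in W' -> x \in W by rewrite !inE => /and3P [].
have nv l : l \in M -> (v \notin l) && (f v \notin l).
  move=> /sM /imsetP [x xW' ->]; rewrite !inE !negb_or.
  move: (xW'); rewrite !inE => /and3P [xfv xv xW].
  rewrite eq_sym xv eq_sym (v_src x xW) eq_sym xfv /=.
  by apply: contra xv => /eqP /f_inj -> //; rewrite vW.
have [nsv nsfv] : ~~ served M v /\ ~~ served M (f v).
  by split; apply/exists_inP => -[l /nv /andP [nvl nfvl]]; apply/negP.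
split.
- exact: schedule_add_pos_link (fW vW) nsv nsfv.
- move=> x xW; rewrite served_setU1 !inE.
  have [//|xv] := eqVneq x v; have [//|xfv] := eqVneq x (f v).
  by rewrite coverM // !inE xv xfv xW.
- rewrite subUset sub1set; apply/andP; split; first by apply/imsetP; exists v.
  by apply/subsetP => l /sM /imsetP [x /W'W xW ->]; apply/imsetP; exists x.
Qed.

End OnW.

(* The links {x, f x} form paths and cycles: a path start is matched to its
   successor and removed; on the remaining even cycles the colour class of [c]
   picks every other link. *)
Lemma sdr_schedule_exists (W : {set V}) : (forall x, x \in W -> pos_link Q x (f x)) ->
  {in W &, injective f} -> {in W &, forall x y, pos_link Q x y -> c x != c y} ->
  exists M, sdr_schedule W M.
Proof.
have [n] := ubnP #|W|; elim: n W => // n IH W ltWn fW f_inj c_proper.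
have [/exists_inP [v vW /forall_inP v_src] | /exists_inPn no_src] :=
  boolP [exists v in W, [forall x in W, f x != v]].
  set W' := W :\ v :\ f v.
  have sW'W : {subset W' <= W} by apply/subsetP/(subset_trans (subD1set _ _) (subD1set _ _)).
  have ltW'n : #|W'| < n.
    move: ltWn; rewrite [#|W|](cardsD1 v) vW add1n ltnS; apply: leq_trans.
    by rewrite ltnS subset_leq_card ?subD1set.
  have [M SM] := IH W' ltW'n (fun x xW' => fW x (sW'W x xW'))
    (sub_in2 sW'W f_inj) (sub_in2 sW'W c_proper).
  by exists ([set v; f v] |: M); apply: sdr_schedule_source.
exists [set [set x; f x] | x in [set x in W | c x]]; apply: sdr_schedule_perm => // v vW.
by have /forall_inPn [x xW /negPn /eqP fxv] := no_src v vW; exists x.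
Qed.

End SdrSchedule.

(* By Hall and the bipartite structure some schedule serves every node of top
   weight; exchanging along it would make [M] heavier if [M] missed one. *)
Lemma max_weight_schedule_covers Q w M m (c : V -> bool) :
  max_weight_schedule Q w M -> (forall i, 0 < w i <= m) -> 0 < maxq e Q ->
  (forall i, w i = m -> critical e Q i) ->
  (forall x y, w x = m -> w y = m -> pos_link Q x y -> c x != c y) ->
  forall i, w i = m -> served M i.
Proof.
move=> [SM optM] w_bnd maxq_gt0 crit c_proper i wi; apply: contraT => ni.
set W := [set j | w j == m].
have [f fW f_inj] : has_sdr (pos_link Q) W.
  by apply/hall_marriage/hall_condition_critical => // x; rewrite inE => /eqP /crit.
have c_properW : {in W &, forall x y, pos_link Q x y -> c x != c y}.
  by move=> x y; rewrite !inE => /eqP wx /eqP wy; apply: c_proper.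
have [Ms [SMs coverMs _]] := sdr_schedule_exists fW f_inj c_properW.
have iW : i \in W by rewrite inE wi.
have [M' SM' [H | [x /andP [sx nsx] H]]] := schedule_exchange SM SMs (coverMs i iW) ni.
  by have := sched_weight_add1 w ni H; have := optM _ SM'; have := w_bnd i; lia.
have wx : w x < m.
  rewrite ltn_neqAle (andP (w_bnd x)).2 andbT; apply: contra nsx => /eqP wx.
  by apply: coverMs; rewrite inE wx.
by have := sched_weight_swap w ni sx H; have := optM _ SM'; lia.
Qed.

End Schedules.

Lemma weight_bounds (V : finType) (e : rel V) Q (u : bool) (i : V) :
  0 < weight e Q u i <= 5.
Proof. by rewrite /weight; case: (critical e Q i); case: (heavy e Q i); case: u. Qed.

Lemma weight_eq5 (V : finType) (e : rel V) Q (u : bool) (i : V) :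
  (weight e Q u i == 5) = critical e Q i && ~~ u.
Proof. by rewrite /weight; case: (critical e Q i); case: (heavy e Q i); case: u. Qed.

Lemma Uv_frame1 (V : finType) (Ms : nat -> {set {set V}}) k' i :
  Uv Ms (3 * k').+1 i = Rv Ms (3 * k') i.
Proof. by rewrite /Uv -[(3 * k').+1]addn1 [3 * k']mulnC modnMDl addn1. Qed.

Lemma Uv_frame2 (V : finType) (Ms : nat -> {set {set V}}) k' i :
  Uv Ms (3 * k').+2 i = Rv Ms (3 * k').+1 i && Rv Ms (3 * k') i.
Proof. by rewrite /Uv -[(3 * k').+2]addn2 [3 * k']mulnC modnMDl addn2. Qed.

Section LCNSB.
Variables (V : finType) (e : rel V).
Hypotheses (e_sym : symmetric e) (e_irr : irreflexive e).
Variables (Q : nat -> {set V} -> nat) (Ms : nat -> {set {set V}}).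
Hypotheses (lcnsb : forall k, lcnsb_choice e Q Ms k) (dynamics : no_arrival_dynamics Q Ms).

Lemma node_queue_next k i : node_queue e (Q k.+1) i = node_queue e (Q k) i - Rv Ms k i.
Proof. exact: node_queue_transmit (lcnsb k).1 (dynamics k) i. Qed.

Lemma link_queue_nonincr k1 k2 l : k1 <= k2 -> Q k2 l <= Q k1 l.
Proof.
move=> /subnK <-; elim: (k2 - k1) => // d IH.
by rewrite addSn dynamics; apply: leq_trans (leq_subr _ _) IH.
Qed.

Lemma maxq_nonincr k : maxq e (Q k.+1) <= maxq e (Q k).
Proof.
apply: maxq_le => i; rewrite node_queue_next.
exact: leq_trans (leq_subr _ _) (node_queue_le_maxq _ _ _).
Qed.

(* A link still backlogged at slot k2 was backlogged at every earlier slot,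
   where the maximality of the LC-NSB schedule served one of its ends. *)
Lemma backlogged_link_served k1 k2 x y : k1 <= k2 -> pos_link e (Q k2) x y ->
  Rv Ms k1 x || Rv Ms k1 y.
Proof.
move=> le12 /andP [exy Q2xy]; apply: (max_weight_schedule_maximal (lcnsb k1)).
  by move=> j; case/andP: (weight_bounds e (Q k1) (Uv Ms k1 j) j).
by rewrite /pos_link /= exy (leq_trans Q2xy) ?link_queue_nonincr.
Qed.

Lemma lcnsb_serves_critical k (c : V -> bool) : 0 < maxq e (Q k) ->
  (forall x y, ~~ Uv Ms k x -> ~~ Uv Ms k y -> pos_link e (Q k) x y -> c x != c y) ->
  forall i, critical e (Q k) i -> ~~ Uv Ms k i -> Rv Ms k i.
Proof.
move=> maxq_gt0 c_proper i crit_i nUi.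
apply: (max_weight_schedule_covers e_sym e_irr (lcnsb k) (m := 5) (c := c)) => //.
- by move=> j; apply: weight_bounds.
- by move=> j /eqP; rewrite weight_eq5 => /andP [].
- by move=> x y /eqP + /eqP; rewrite !weight_eq5 => /andP [_ nUx] /andP [_ nUy]; apply: c_proper.
- by apply/eqP; rewrite weight_eq5 crit_i.
Qed.

Lemma node_queue_frame_mid k' i :
  node_queue e (Q (3 * k').+2) i <= maxq e (Q (3 * k')) - 1.
Proof.
have qD := node_queue_le_maxq e (Q (3 * k')) i.
rewrite !node_queue_next.
case R0: (Rv Ms (3 * k') i); first by lia.
case R1: (Rv Ms (3 * k').+1 i); first by lia.
have [lt_qD | ge_qD] := ltnP (node_queue e (Q (3 * k')) i) (maxq e (Q (3 * k'))).
  by lia.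
have [D0 | D_gt0] := posnP (maxq e (Q (3 * k'))); first by lia.
have q1i : node_queue e (Q (3 * k').+1) i = maxq e (Q (3 * k')).
  by rewrite node_queue_next R0 subn0; apply/eqP; rewrite eqn_leq qD.
have maxq1 : maxq e (Q (3 * k').+1) = maxq e (Q (3 * k')).
  by apply/eqP; rewrite eqn_leq maxq_nonincr -{1}q1i node_queue_le_maxq.
suff : Rv Ms (3 * k').+1 i by rewrite R1.
apply: (lcnsb_serves_critical (c := fun _ => true)).
- by rewrite maxq1.
- move=> x y; rewrite !Uv_frame1 => nR0x nR0y /(backlogged_link_served (leqnSn _)).
  by rewrite (negbTE nR0x) (negbTE nR0y).
- by rewrite /critical q1i maxq1.
- by rewrite Uv_frame1 R0.
Qed.

Lemma frame_end_served k' i :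
  maxq e (Q (3 * k')) - 2 < node_queue e (Q (3 * k').+2) i -> Rv Ms (3 * k').+2 i.
Proof.
move=> q2_big; have maxq2_le : maxq e (Q (3 * k').+2) <= maxq e (Q (3 * k')) - 1.
  by apply: maxq_le => j; apply: node_queue_frame_mid.
have crit_i : critical e (Q (3 * k').+2) i.
  by rewrite /critical eqn_leq node_queue_le_maxq /=; lia.
have nUi : ~~ Uv Ms (3 * k').+2 i.
  rewrite Uv_frame2; apply/negP => /andP [R1 R0].
  move: q2_big; rewrite !node_queue_next R1 R0.
  by have := node_queue_le_maxq e (Q (3 * k')) i; lia.
apply: (lcnsb_serves_critical (c := Rv Ms (3 * k').+1)) => //.
  by apply: leq_trans (node_queue_le_maxq e _ i); lia.
move=> x y; rewrite !Uv_frame2 => nUx nUy xy.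
move: (backlogged_link_served (leqnSn _) xy) (backlogged_link_served (leqW (leqnSn _)) xy).
move: nUx nUy; case: (Rv Ms (3 * k').+1 x); case: (Rv Ms (3 * k').+1 y) => //=.
by move=> /negbTE -> /negbTE ->.
Qed.

End LCNSB.

Theorem proposition2 (V : finType) (e : rel V)
    (e_sym : symmetric e) (e_irr : irreflexive e)
    (Q : nat -> {set V} -> nat) (Ms : nat -> {set {set V}}) :
  (forall k, lcnsb_choice e Q Ms k) ->
  no_arrival_dynamics Q Ms ->
  forall k' : nat,
    2 <= maxq e (Q (3 * k')) ->
    maxq e (Q (3 * k' + 3)) <= maxq e (Q (3 * k')) - 2.
Proof.
move=> lcnsb dynamics k' _; rewrite addn3.
apply: maxq_le => i; rewrite (node_queue_next lcnsb dynamics).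
have := node_queue_frame_mid e_sym e_irr lcnsb dynamics k' i.
case: (leqP (node_queue e (Q (3 * k').+2) i) (maxq e (Q (3 * k')) - 2)) => [|q2_big].
  by lia.
by rewrite (frame_end_served e_sym e_irr lcnsb dynamics q2_big); lia.
Qed.
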